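(* Let $R$ be a commutative ring and $M$ a non-zero $R$-module. (1) If $M=\sum_{i=1}^n K_i$ is a minimal second representation of $M$ such that the ideals $Ann(K_1),\dots,Ann(K_n)$ are pairwise incomparable (i.e. $att^s(M)=Min(att^s(M))$) and $K_i\cap\sum_{j\neq i}K_j$ is a PS-hollow submodule of $M$ for all $i\in\{1,\dots,n\}$, then $M=\bigoplus_{i=1}^n K_i$ if and only if $K_i\cap K_j=0$ for all $i\neq j$. (2) Let $M$ be distributive and $M=\sum_{i=1}^n K_i$ a minimal PS-hollow representation, with $K_i$ $H_i$-PS-hollow, such that every submodule of $K_i$ is zero or strongly irreducible or $H_i$-PS-hollow. Then $M=\bigoplus_{i=1}^n K_i$.
   Context: A submodule $N\neq 0$ is second iff for every ideal $I\leq R$, $IN=N$ or $IN=0$. A minimal second representation of $M$ is $M=\sum_{i=1}^n K_i$ with each $K_i$ second, the ideals $Ann(K_i)$ pairwise distinct, and no $K_j$ contained in $\sum_{i\neq j}K_i$; $att^s(M)=\{Ann(K_i)\}$. An $R$-submodule $N\leq M$ is PS-hollow iff for every ideal $I$ and submodule $L$: $N\subseteq IM+L$ implies $N\subseteq IM$ or $N\subseteq L$. For PS-hollow $N$: $A_N=\{I: N\subseteq IM\}$, $H_N$ its minimal elements, $In(N)=\bigcap_{I\in H_N}IM$ ($=M$ if $H_N=\emptyset$); $N$ is $H$-PS-hollow iff PS-hollow with $H_N=H$. A minimal PS-hollow representation is $M=\sum_{i=1}^n K_i$ with each $K_i$ $H_i$-PS-hollow, $In(K_1),\dots,In(K_n)$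 pairwise incomparable, and $K_j\not\subseteq\sum_{i\neq j}K_i$ for all $j$. A proper submodule $N\lneq M$ is strongly irreducible iff for all submodules $A,B\leq M$, $A\cap B\subseteq N$ implies $A\subseteq N$ or $B\subseteq N$. $M$ is distributive iff its lattice of submodules is distributive. *)

From HB Require Import structures.
From mathcomp Require Import all_boot all_order all_algebra.
From mathcomp Require Import boolp classical_sets.
Set Implicit Arguments. Unset Strict Implicit. Unset Printing Implicit Defensive.
Import GRing.Theory.
Local Open Scope ring_scope.
Local Open Scope classical_set_scope.

Section Defs.
Variables (R : comPzRingType) (M : lmodType R).

Definition submodule (N : set M) : Prop :=
  N 0 /\ (forall x y, N x -> N y -> N (x + y)) /\ (forall (r : R) x, N x -> N (r *: x)).

(* ideals of R (R itself included) *)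
Definition ideal (I : set R) : Prop :=
  I 0 /\ (forall a b, I a -> I b -> I (a + b)) /\ (forall r a, I a -> I (r * a)).

Definition idmul (I : set R) (N : set M) : set M :=
  [set x | exists n (r : 'I_n -> R) (y : 'I_n -> M),
      (forall i, I (r i)) /\ (forall i, N (y i)) /\ x = \sum_(i < n) r i *: y i].

Definition addsub (A B : set M) : set M :=
  [set x | exists a b, A a /\ B b /\ x = a + b].

Definition bigsub n (P : pred 'I_n) (K : 'I_n -> set M) : set M :=
  [set x | exists y : 'I_n -> M, (forall i, P i -> K i (y i)) /\
                                 x = \sum_(i < n | P i) y i].

Definition zerosub : set M := [set 0].
Arguments zerosub : clear implicits.

Definition Ann (N : set M) : set R := [set r | forall x, N x -> r *: x = 0].

Definition second (N : set M) : Prop :=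
  submodule N /\ N <> zerosub /\
  forall I, ideal I -> idmul I N = N \/ idmul I N = zerosub.

Definition min_second_rep n (K : 'I_n -> set M) : Prop :=
  (forall i, second (K i)) /\
  (forall i j, i != j -> Ann (K i) <> Ann (K j)) /\
  bigsub predT K = setT /\
  (forall j, ~ (K j `<=` bigsub (fun i => i != j) K)).

Definition direct_sum n (K : 'I_n -> set M) : Prop :=
  bigsub predT K = setT /\
  forall i, K i `&` bigsub (fun j => j != i) K = zerosub.

Definition PS_hollow (N : set M) : Prop :=
  submodule N /\
  forall I L, ideal I -> submodule L ->
    N `<=` addsub (idmul I setT) L -> N `<=` idmul I setT \/ N `<=` L.

Definition A_of (N : set M) : set (set R) := [set I | ideal I /\ N `<=` idmul I setT].

Definition H_of (N : set M) : set (set R) :=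
  [set I | A_of N I /\ forall J, A_of N J -> J `<=` I -> J = I].

(* intersection of I M over I in H_N (which is M when H_N is empty) *)
Definition In_of (N : set M) : set M :=
  [set x | forall I, H_of N I -> idmul I setT x].

Definition H_PS_hollow (H : set (set R)) (N : set M) : Prop :=
  PS_hollow N /\ H_of N = H.

Definition min_PS_hollow_rep n (H : 'I_n -> set (set R)) (K : 'I_n -> set M) : Prop :=
  (forall i, H_PS_hollow (H i) (K i)) /\
  (forall i j, i != j -> ~ (In_of (K i) `<=` In_of (K j))) /\
  bigsub predT K = setT /\
  (forall j, ~ (K j `<=` bigsub (fun i => i != j) K)).

Definition strongly_irreducible (N : set M) : Prop :=
  submodule N /\ N <> setT /\
  forall A B, submodule A -> submodule B -> A `&` B `<=` N -> A `<=` N \/ B `<=` N.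

Definition distributive_module : Prop :=
  forall A B C, submodule A -> submodule B -> submodule C ->
    A `&` addsub B C = addsub (A `&` B) (A `&` C).

End Defs.

From HB Require Import structures.
From mathcomp Require Import all_boot all_order all_algebra.
From mathcomp Require Import boolp classical_sets.
Set Implicit Arguments. Unset Strict Implicit. Unset Printing Implicit Defensive.
Import GRing.Theory.
Local Open Scope ring_scope.
Local Open Scope classical_set_scope.

(* Both parts show that K_i meets the sum of the other summands trivially by
   removing those summands one at a time: for j <> i, the part of K_i lying in
   a sum of summands that contains K_j already lies in that sum without K_j.
   In (1), the annihilators of second modules are prime, so a product of
   elements witnessing their incomparability gives an a annihilating every K_k
   with k <> j but not K_j; as K_j is second, K_j = aK_j and aM <= K_j.
   PS-hollowness of K_i cap sum_{k<>i} K_k then puts it either in aM <= K_j,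
   where it meets K_i trivially, or in the sum of the remaining summands.
   In (2), distributivity gives K_i cap (K_j + L) = (K_i cap K_j) + (K_i cap L),
   and K_i cap K_j = 0: it is not strongly irreducible (that would make K_i and
   K_j comparable), and were it H_i- and H_j-PS-hollow we would get H_i = H_j,
   hence In(K_i) = In(K_j). *)

Definition pideal (R : comPzRingType) (a : R) : set R := [set c | exists r, c = r * a].

Lemma pideal_ideal (R : comPzRingType) (a : R) : ideal (pideal a).
Proof.
split; first by exists 0; rewrite mul0r.
split; first by move=> _ _ [r ->] [s ->]; exists (r + s); rewrite mulrDl.
by move=> r _ [s ->]; exists (r * s); rewrite mulrA.
Qed.

Section Submodules.
Variables (R : comPzRingType) (M : lmodType R).

Lemma submoduleI (A B : set M) :
  submodule A -> submodule B -> submodule (A `&` B).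
Proof.
move=> [A0 [AD AZ]] [B0 [BD BZ]]; split=> //; split.
  by move=> x y [? ?] [? ?]; split; [apply: AD|apply: BD].
by move=> r x [? ?]; split; [apply: AZ|apply: BZ].
Qed.

Lemma submodule_sum (N : set M) n (P : pred 'I_n) (y : 'I_n -> M) :
  submodule N -> (forall i, P i -> N (y i)) -> N (\sum_(i < n | P i) y i).
Proof. by move=> [N0 [ND _]]; apply: big_ind. Qed.

Lemma idmulS (I : set R) (A B : set M) : A `<=` B -> idmul I A `<=` idmul I B.
Proof.
move=> AB _ [m [r [y [Ir [Ay ->]]]]].
by exists m, r, y; split=> //; split=> // i; apply/AB/Ay.
Qed.

Variables (n : nat) (K : 'I_n -> set M).
Hypothesis submodK : forall i, submodule (K i).

Lemma bigsub_submodule (P : pred 'I_n) : submodule (bigsub P K).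
Proof.
split; [|split].
- by exists (fun=> 0); split; [move=> i _; case: (submodK i)|rewrite big1].
- move=> _ _ [y1 [K1 ->]] [y2 [K2 ->]]; exists (fun i => y1 i + y2 i).
  split; last by rewrite big_split.
  by move=> i Pi; case: (submodK i) => _ [KD _]; apply: KD; [apply: K1|apply: K2].
- move=> r _ [y [Ky ->]]; exists (fun i => r *: y i); split; last by rewrite scaler_sumr.
  by move=> i Pi; case: (submodK i) => _ [_ KZ]; apply/KZ/Ky.
Qed.

Lemma sub_bigsub (P : pred 'I_n) j : P j -> K j `<=` bigsub P K.
Proof.
move=> Pj x Kx; exists (fun k => if k == j then x else 0); split.
  by move=> i _; case: eqP => [->//|_]; case: (submodK i).
by rewrite (bigD1 j) //= eqxx big1 ?addr0 // => i /andP[_ /negbTE ->].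
Qed.

Lemma bigsubD1 (P : pred 'I_n) j :
  P j -> bigsub P K `<=` addsub (K j) (bigsub (fun k => P k && (k != j)) K).
Proof.
move=> Pj _ [y [Ky ->]]; exists (y j), (\sum_(i < n | P i && (i != j)) y i).
split; first exact: Ky.
split; last by rewrite (bigD1 j).
by exists y; split => // i /andP[Pi _]; apply: Ky.
Qed.

Lemma bigsub_pred0 (P : pred 'I_n) : P =1 pred0 -> bigsub P K `<=` [set 0].
Proof. by move=> P0 _ [y [_ ->]]; rewrite big_pred0. Qed.

Lemma bigsub_peel (S : set M) i :
  (forall (P : pred 'I_n) j, P j -> j != i ->
     S `<=` bigsub P K -> S `<=` bigsub (fun k => P k && (k != j)) K) ->
  forall P : pred 'I_n, ~~ P i -> S `<=` bigsub P K -> S `<=` [set 0].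
Proof.
move=> peel P.
have [m] := ubnP #|SimplPred P|; elim: m P => // m IH P ltPm Pi SP.
case: (pickP P) => [j Pj|P0]; last by move=> x /SP; apply: bigsub_pred0.
have ji : j != i by apply: contraNneq Pi => <-.
apply: (IH (fun k => P k && (k != j))); last exact: peel.
  by move: ltPm; rewrite (cardD1x Pj) add1n ltnS.
by rewrite (negbTE Pi).
Qed.

Lemma direct_sum_peel :
  bigsub predT K = setT ->
  (forall i (P : pred 'I_n) j, P j -> j != i ->
     K i `&` bigsub (fun k => k != i) K `<=` bigsub P K ->
     K i `&` bigsub (fun k => k != i) K `<=` bigsub (fun k => P k && (k != j)) K) ->
  direct_sum K.
Proof.
move=> sumK peel; split=> // i; apply/seteqP; split.
  apply: (bigsub_peel (peel i) (P := fun k => k != i)); first by rewrite /= negbK.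
  by move=> x [].
move=> _ ->; split; first by case: (submodK i).
by case: (bigsub_submodule (fun k => k != i)).
Qed.

Lemma distributive_peel (S : set M) i j (P : pred 'I_n) :
  distributive_module M -> S `<=` K i -> K i `&` K j = [set 0] -> P j ->
  S `<=` bigsub P K -> S `<=` bigsub (fun k => P k && (k != j)) K.
Proof.
move=> distrM SKi Kij0 Pj SP x Sx.
have := distrM _ _ _ (submodK i) (submodK j) (bigsub_submodule (fun k => P k && (k != j))).
move/seteqP => [+ _] => /(_ x (conj (SKi x Sx) (bigsubD1 Pj (SP x Sx)))).
by rewrite Kij0 => -[_ [v [-> [[_ Cv] ->]]]]; rewrite add0r.
Qed.

Lemma idmul_pideal_sub a j :
  bigsub predT K = setT -> (forall k, k != j -> Ann (K k) a) ->
  idmul (pideal a) setT `<=` K j.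
Proof.
move=> sumK aK _ [m [r [y [ar [_ ->]]]]]; apply: submodule_sum (submodK j) _ => t _.
have [c ->] := ar t; have : bigsub predT K (y t) by rewrite sumK.
case: (submodK j) => _ [_ KZ] [z [Kz ->]].
rewrite scaler_sumr (bigD1 j) //= big1 ?addr0; first by rewrite -scalerA; apply/KZ/KZ/Kz.
by move=> k kj; rewrite -scalerA (aK k kj) ?scaler0 //; apply: Kz.
Qed.

Lemma direct_sumI (i j : 'I_n) : direct_sum K -> i != j -> K i `&` K j = [set 0].
Proof.
move=> [_ dK] ij; apply/seteqP; split.
  have <- : K i `&` bigsub (fun k => k != i) K = [set 0] := dK i.
  by move=> x [Kix Kjx]; split=> //; apply: (sub_bigsub (j := j)); rewrite // eq_sym.
by move=> _ ->; split; [case: (submodK i)|case: (submodK j)].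
Qed.

End Submodules.

Section SecondModules.
Variables (R : comPzRingType) (M : lmodType R).
Implicit Types (N : set M) (a b : R).

Lemma AnnMl N a b : Ann N b -> Ann N (a * b).
Proof. by move=> Nb x Nx; rewrite -scalerA Nb // scaler0. Qed.

Lemma second_Ann1 N : second N -> ~ Ann N 1.
Proof.
move=> [[N0 _] [Nneq0 _]] N1; apply: Nneq0; apply/seteqP; split=> [x Nx|_ ->] //.
by rewrite /= -[x]scale1r N1.
Qed.

Lemma second_pideal N a : second N -> ~ Ann N a -> idmul (pideal a) N = N.
Proof.
move=> secN Na; case: (secN) => _ [_ /(_ _ (pideal_ideal a))] [] // aN0.
have /existsNP[x /not_implyP[Nx axNZ]] := Na; exfalso; apply: axNZ.
have : idmul (pideal a) N (a *: x).
  exists 1%N, (fun=> a), (fun=> x); rewrite big_ord1; do !split=> //.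
  by exists 1; rewrite mul1r.
by rewrite aN0.
Qed.

Lemma second_AnnM N a b : second N -> ~ Ann N a -> ~ Ann N b -> ~ Ann N (a * b).
Proof.
move=> secN Na Nb Nab; apply: Nb => y.
rewrite -(second_pideal secN Na) => -[m [r [z [ar [Nz ->]]]]].
rewrite scaler_sumr big1 // => i _; have [c ->] := ar i.
by rewrite scalerA mulrCA [b * a]mulrC -scalerA Nab ?scaler0.
Qed.

End SecondModules.

Section SecondRepresentation.
Variables (R : comPzRingType) (M : lmodType R) (n : nat) (K : 'I_n -> set M).
Hypothesis secK : forall i, second (K i).
Hypothesis incK : forall i j, i != j -> ~ (Ann (K i) `<=` Ann (K j)).
Let submodK i : submodule (K i) := (secK i).1.

Lemma Ann_separating j : exists a, (forall k, k != j -> Ann (K k) a) /\ ~ Ann (K j) a.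
Proof.
have sep k : exists b, k != j -> Ann (K k) b /\ ~ Ann (K j) b.
  case: (eqVneq k j) => [_|kj]; first by exists 0.
  have /existsNP[b /not_implyP[Kkb Kjb]] := incK kj; by exists b.
have [f fP] := choice sep; exists (\prod_(k | k != j) f k); split.
  by move=> k kj; rewrite (bigD1 k) //= mulrC; apply: AnnMl; case: (fP k kj).
apply: (big_ind (fun r => ~ Ann (K j) r)); first exact: second_Ann1.
  by move=> a b; apply: second_AnnM.
by move=> k kj; case: (fP k kj).
Qed.

Lemma second_rep_peel (S : set M) i j (P : pred 'I_n) :
  bigsub predT K = setT -> PS_hollow S -> S `<=` K i -> K i `&` K j = [set 0] ->
  P j -> S `<=` bigsub P K -> S `<=` bigsub (fun k => P k && (k != j)) K.
Proof.
move=> sumK hollowS SKi Kij0 Pj SP.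
have [a [aK aKj]] := Ann_separating j.
have SaM : S `<=` addsub (idmul (pideal a) setT) (bigsub (fun k => P k && (k != j)) K).
  move=> x /SP /(bigsubD1 Pj) [z [w [Kz [Cw ->]]]]; exists z, w; split=> //.
  by apply: (idmulS (A := K j)) => //; rewrite second_pideal.
case: (hollowS.2 _ _ (pideal_ideal a) (bigsub_submodule submodK _) SaM) => // SaMsub x Sx.
have : (K i `&` K j) x by split; [exact: SKi|exact: idmul_pideal_sub sumK aK _ (SaMsub x Sx)].
by rewrite Kij0 => ->; case: (bigsub_submodule submodK (fun k => P k && (k != j))).
Qed.

End SecondRepresentation.

Section PSHollowRepresentation.
Variables (R : comPzRingType) (M : lmodType R).

Lemma strongly_irreducibleI (A B : set M) :
  submodule A -> submodule B -> strongly_irreducible (A `&` B) -> A `<=` B \/ B `<=` A.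
Proof.
move=> sA sB [_ [_ irrAB]].
by case: (irrAB A B sA sB (fun _ h => h)) => AB; [left|right] => x /AB [].
Qed.

Lemma eq_In_of (A B : set M) : H_of A = H_of B -> In_of A = In_of B.
Proof. by rewrite /In_of => ->. Qed.

Lemma min_PS_hollow_rep_meet0 n (H : 'I_n -> set (set R)) (K : 'I_n -> set M) i j :
  min_PS_hollow_rep H K ->
  (forall i L, submodule L -> L `<=` K i ->
     L = [set 0] \/ strongly_irreducible L \/ H_PS_hollow (H i) L) ->
  i != j -> K i `&` K j = [set 0].
Proof.
move=> [hollowK [incK [_ minK]]] subK ij.
have submodK k : submodule (K k) by case: (hollowK k) => [[]].
have sKij := submoduleI (submodK i) (submodK j).
have notSI : ~ strongly_irreducible (K i `&` K j).
  move/(strongly_irreducibleI (submodK i) (submodK j)) => [KiKj|KjKi].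
    by apply: (minK i); apply: subset_trans KiKj (sub_bigsub submodK _); rewrite eq_sym.
  exact/(minK j)/(subset_trans KjKi (sub_bigsub submodK ij)).
case: (subK i _ sKij (fun _ h => h.1)) => [//|[/notSI//|Hi]].
case: (subK j _ sKij (fun _ h => h.2)) => [//|[/notSI//|Hj]].
exfalso; apply: (incK i j ij); rewrite (@eq_In_of (K i) (K j)) //.
by rewrite (hollowK i).2 (hollowK j).2 -Hi.2 -Hj.2.
Qed.

End PSHollowRepresentation.

Theorem theorem5p21 (R : comPzRingType) (M : lmodType R) :
  (exists x : M, x != 0) ->
  (* (1) *)
  (forall (n : nat) (K : 'I_n -> set M),
     min_second_rep K ->
     (forall i j, i != j -> ~ (Ann (K i) `<=` Ann (K j))) ->
     (forall i, PS_hollow (K i `&` bigsub (fun j => j != i) K)) ->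
     (direct_sum K <-> (forall i j, i != j -> K i `&` K j = [set 0])))
  /\
  (* (2) *)
  (distributive_module M ->
   forall (n : nat) (H : 'I_n -> set (set R)) (K : 'I_n -> set M),
     min_PS_hollow_rep H K ->
     (forall i L, submodule L -> L `<=` K i ->
        L = [set 0] \/ strongly_irreducible L \/ H_PS_hollow (H i) L) ->
     direct_sum K).
Proof.
move=> _; split.
- move=> n K [secK [_ [sumK _]]] incK hollowK.
  have submodK i : submodule (K i) := (secK i).1.
  split=> [dK i j|meet0]; first exact: direct_sumI.
  apply: direct_sum_peel => // i P j Pj ji.
  apply: (second_rep_peel secK incK sumK (hollowK i)) => //.
  by apply: meet0; rewrite eq_sym.
- move=> distrM n H K repK subK; have [hollowK [_ [sumK _]]] := repK.
  have submodK i : submodule (K i) by case: (hollowK i) => [[]].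
  apply: direct_sum_peel => // i P j Pj ji.
  apply: distributive_peel => //.
  by apply: (min_PS_hollow_rep_meet0 repK subK); rewrite eq_sym.
Qed.
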